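(* Consider the network-interference setting and the conditional randomization test described in the context, and suppose the null hypothesis $H_0^{\mathrm{sp}}$ holds, i.e. in the outcome model $h\neq0$ and $g=0$. Then $$\mathbb{P}(\mathrm{pval}\le\alpha\mid\mathcal{I})\le\alpha\quad\text{for every }\alpha\in[0,1]\text{ and every }n>0,$$ where the randomness is with respect to the conditional randomization distribution $\mathbb{P}_n^{\mathcal{I}}$.
   Context: Units $i=1,\dots,n$ receive treatments $Z\in\{0,1\}^n$ from a known design $\mathbb{P}_n$. Potential outcomes: $Y_i(z)=\mu+b(X_i)+z_ih(X_i)+g(\mathbf{X},z_{-i})+\epsilon_i$, observed $Y_i=Y_i(Z)$, with covariates $X_i$, covariate matrix $\mathbf{X}$, $z_{-i}$ the vector $z$ without entry $i$, arbitrary functions $b,h,g$, and independent mean-zero noise with $\mathbb{E}(\epsilon_i\mid\mathbf{X})=0$. An adjacency matrix $\mathbf{A}\in\{0,1\}^{n\times n}$ is observed; $A_{i\cdot}$ is its $i$-th row. A set of focal units $\mathcal{I}\subset[n]$ is selected at random. Test: fit, on units $i\in\mathcal{I}$ only, a model $\mathcal{M}_0$ of $Y_i$ on $(Z_i,X_i)$ and a model $\mathcal{M}_1$ of $Y_i$ on $(Z_i,A_{i\cdot}^\top Z,\mathbf{X})$ (any ML models), and set $t_n(Y,Z,\mathbf{X};\mathbf{A})=\mathrm{CV}_{n,k}(\mathcal{M}_0)-\mathrm{CV}_{n,k}(\mathcal{M}_1)$ (difference of $k$-fold cross-validation squared losses). Let $T_n=t_n(Y,Z,\mathbf{X};\mathbf{A})$.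 Let $\mathbb{P}_n^{\mathcal{I}}(z)\propto\mathbb{1}\{z_{\mathcal{I}}=Z_{\mathcal{I}}\}\mathbb{P}_n(z)$, the design conditioned on the focal units' treatments equalling their realized values. Draw $Z^{(r)}$ i.i.d. from $\mathbb{P}_n^{\mathcal{I}}$, $r=1,\dots,R$, compute $t^{(r)}=t_n(Y,Z^{(r)},\mathbf{X};\mathbf{A})$, and set $\mathrm{pval}=\frac1{1+R}[\sum_r\mathbb{1}\{t^{(r)}>T_n\}+U(1+m_R)]$ with $U\sim\mathrm{Unif}[0,1]$ independent and $m_R=\sum_r\mathbb{1}\{t^{(r)}=T_n\}$. *)

From HB Require Import structures.
From mathcomp Require Import all_boot all_order all_algebra.
From mathcomp Require Import all_classical all_reals all_analysis.
Set Implicit Arguments. Unset Strict Implicit. Unset Printing Implicit Defensive.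
Import Order.TTheory GRing.Theory Num.Theory.
Local Open Scope ring_scope.
Local Open Scope classical_set_scope.

Notation assign n := {ffun 'I_n -> bool}.

Section CRT.
Variables (R : realType) (n : nat) (Tx : Type).

(* Potential outcome
   Y_i(z) = mu + b(X_i) + z_i h(X_i) + g(X, z_{-i}) + eps_i.
   g receives i and the full z, but is required (hypothesis g_only_minus_i
   in the theorem) to depend on z only through z_{-i}. *)
Definition pot_outcome (mu : R) (b h : Tx -> R)
  (g : ('I_n -> Tx) -> 'I_n -> assign n -> R)
  (X : 'I_n -> Tx) (eps : 'I_n -> R) (z : assign n) (i : 'I_n) : R :=
  mu + b (X i) + (z i)%:R * h (X i) + g X i z + eps i.

Definition depends_only_on_minus_i
  (g : ('I_n -> Tx) -> 'I_n -> assign n -> R) : Prop :=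
  forall X i (z z' : assign n), (forall j, j != i -> z j = z' j) ->
    g X i z = g X i z'.

(* An arbitrary (ML) learning procedure with features of type F: it maps a
   training set of (feature, response) pairs to a fitted predictor. *)
Definition learner (F : Type) := seq (F * R) -> F -> R.

Definition CV (F : Type) (k : nat) (fold : 'I_n -> 'I_k) (I : {set 'I_n})
  (L : learner F) (feat : 'I_n -> F) (Y : 'I_n -> R) : R :=
  #|I|%:R^-1 *
  \sum_(m < k) \sum_(i in I | fold i == m)
     (Y i - L [seq (feat j, Y j) | j <- enum I & fold j != m] (feat i)) ^+ 2.

Definition exposure (A : 'I_n -> 'I_n -> bool) (z : assign n) (i : 'I_n) : R :=
  (\sum_(j < n) (A i j && z j))%:R.

Definition tstat (k : nat) (fold : 'I_n -> 'I_k) (I : {set 'I_n})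
  (M0 : learner (bool * Tx)) (M1 : learner (bool * R * ('I_n -> Tx)))
  (A : 'I_n -> 'I_n -> bool) (X : 'I_n -> Tx)
  (Y : 'I_n -> R) (z : assign n) : R :=
  CV fold I M0 (fun i => (z i, X i)) Y
  - CV fold I M1 (fun i => (z i, exposure A z i, X)) Y.

Definition cond_design (P : assign n -> R) (I : {set 'I_n}) (z0 : assign n)
  (z : assign n) : R :=
  (if [forall i in I, z i == z0 i] then P z else 0) /
  \sum_(z' : assign n | [forall i in I, z' i == z0 i]) P z'.

(* Randomized p-value, given observed statistic T, resampled statistics
   t_1..t_Rn and the uniform draw u. *)
Definition pval (Rn : nat) (T : R) (t : 'I_Rn -> R) (u : R) : R :=
  (1 + Rn%:R)^-1 *
  ((#|[set r | t r > T]|)%:R + u * (1 + (#|[set r | t r == T]|)%:R)).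

End CRT.

(* Under the null the outcome of a focal unit depends only on its own
   treatment, so on the support of the conditional design the statistic
   t(Y(z), z) is a fixed function f(z) of the assignment.  The observed and the
   R resampled assignments are then R + 1 i.i.d. draws, and integrating out the
   uniform tie-breaker turns the event {pval <= alpha} into the share
   [rank_share] of the first of the exchangeable values f(Z_0), ..., f(Z_R).
   For every real vector these shares sum to at most alpha (R + 1): write each
   share as an average of [clamp01 (s - m)] over the ranks m its value occupies;
   the values occupying a given rank m are all tied, so each m is counted with
   total weight at most 1.  By exchangeability each share then has expectation
   at most alpha. *)

(* [perm] is imported before [Defs] so that [Defs.pval] shadows [perm.pval]. *)
From mathcomp Require Import fingroup perm.
From Pilot Require Import Defs.
From HB Require Import structures.
From mathcomp Require Import all_boot all_order all_algebra.
From mathcomp Require Import all_classical all_reals all_analysis.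
From mathcomp Require Import lra zify.

Set Implicit Arguments. Unset Strict Implicit. Unset Printing Implicit Defensive.
Import Order.TTheory GRing.Theory Num.Theory.
Local Open Scope ring_scope.

Ltac case_max_min :=
  repeat (match goal with
  | |- context[Num.max ?a ?b] => case: (leP a b)
  | |- context[Num.min ?a ?b] => case: (leP a b) end); intros; lra.

Section Clamp.
Variable R : realFieldType.
Implicit Types s y : R.

Definition clamp01 y := Num.max 0 (Num.min 1 y).

Lemma clamp01_ge0 y : 0 <= clamp01 y.
Proof. by rewrite /clamp01 le_max lexx. Qed.

Lemma sum_clamp01_shift s b :
  \sum_(m < b) clamp01 (s - m%:R) = Num.max 0 (Num.min b%:R s).
Proof.
elim: b => [|b IH]; first by rewrite big_ord0; case_max_min.
rewrite big_ord_recr /= IH /clamp01 -natr1.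
have : (0 : R) <= b%:R by rewrite ler0n.
case_max_min.
Qed.

End Clamp.

Section RankShare.
Variables (R : realFieldType) (N : nat) (x : 'I_N -> R).
Implicit Types (s : R) (i j : 'I_N).

Definition n_above j := #|[set i | x j < x i]|.
Definition n_tied j := #|[set i | x i == x j]|.
Definition n_atleast j := #|[set i | x j <= x i]|.

Lemma n_above_tied j : (n_above j + n_tied j)%N = n_atleast j.
Proof.
rewrite /n_above /n_tied /n_atleast -cardsUI.
have -> : [set i | x j < x i] :&: [set i | x i == x j] = finset.set0.
  by apply/finset.setP => i; rewrite !inE; case: ltgtP.
rewrite cards0 addn0; apply: eq_card => i; rewrite !inE.
by rewrite le_eqVlt orbC eq_sym.
Qed.

Lemma n_tied_gt0 j : (0 < n_tied j)%N.
Proof. by apply/card_gt0P; exists j; rewrite inE. Qed.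

Lemma n_atleast_le j : (n_atleast j <= N)%N.
Proof. by rewrite -[N]card_ord max_card. Qed.

Lemma n_atleast_le_above j j' : x j < x j' -> (n_atleast j' <= n_above j)%N.
Proof.
move=> lt_jj'; apply: subset_leq_card; apply/fintype.subsetP => i; rewrite !inE.
exact: lt_le_trans.
Qed.

(* The probability, for u uniform on [0, 1], that the randomized rank
   [n_above j + u * n_tied j] of [x j] is at most [s]. *)
Definition rank_share s j := clamp01 ((s - (n_above j)%:R) / (n_tied j)%:R).

Definition in_window (m : nat) j := (n_above j <= m < n_atleast j)%N.

Lemma rank_share_window s j : rank_share s j =
  \sum_(m < N) (if in_window m j then (n_tied j)%:R^-1 else 0) * clamp01 (s - m%:R).
Proof.
have tied_gt0 : (0 : R) < (n_tied j)%:R by rewrite ltr0n n_tied_gt0.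
have above_le : (n_above j <= N)%N.
  by rewrite (leq_trans _ (n_atleast_le j)) // -n_above_tied leq_addr.
have -> : rank_share s j =
    (n_tied j)%:R^-1 * Num.max 0 (Num.min (n_tied j)%:R (s - (n_above j)%:R)).
  rewrite maxr_pMr ?invr_ge0 ?ltW // mulr0 minr_pMr ?invr_ge0 ?ltW //.
  by rewrite mulVf ?gt_eqF // mulrC.
have -> : Num.max 0 (Num.min (n_tied j)%:R (s - (n_above j)%:R)) =
    Num.max 0 (Num.min (n_atleast j)%:R s) - Num.max 0 (Num.min (n_above j)%:R s).
  rewrite -n_above_tied natrD.
  have : (0 : R) <= (n_above j)%:R by rewrite ler0n.
  have : (0 : R) <= (n_tied j)%:R by rewrite ler0n.
  case_max_min.
rewrite -!sum_clamp01_shift.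
rewrite (big_ord_widen N (fun m : nat => clamp01 (s - m%:R)) (n_atleast_le j)).
rewrite (big_ord_widen N (fun m : nat => clamp01 (s - m%:R)) above_le).
rewrite big_mkcond [X in _ - X]big_mkcond.
rewrite -sumrB mulr_sumr; apply: eq_bigr => m _; rewrite /in_window.
case: (ltnP m (n_above j)) => [lt_m|_] /=; last first.
  by case: ifP => _; rewrite ?subr0 ?mulr0 ?mul0r.
have lt_m' : (m < n_atleast j)%N.
  by rewrite (leq_trans lt_m) // -n_above_tied leq_addr.
by rewrite lt_m' subrr mulr0 mul0r.
Qed.

Lemma window_tied m j j' : in_window m j -> in_window m j' -> x j = x j'.
Proof.
move=> /andP[a b] /andP[a' b'].
case: (ltgtP (x j) (x j')) => // [/n_atleast_le_above | /n_atleast_le_above] le; lia.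
Qed.

Lemma window_weights_le1 m :
  \sum_j (if in_window m j then (n_tied j)%:R^-1 else 0) <= 1 :> R.
Proof.
rewrite -big_mkcond /=.
case: (pickP (in_window m)) => [j0 win_j0 | no_window]; last by rewrite big_pred0.
rewrite (eq_bigr (fun _ => (n_tied j0)%:R^-1)) => [|j win_j]; last first.
  by rewrite /n_tied (window_tied win_j win_j0).
rewrite sumr_const -(mulr_natl (n_tied j0)%:R^-1).
rewrite ler_pdivrMr ?ltr0n ?n_tied_gt0 // mul1r ler_nat.
apply: subset_leq_card; apply/fintype.subsetP => j win_j.
by rewrite inE (window_tied win_j win_j0).
Qed.

Lemma sum_rank_share_le s : 0 <= s -> \sum_j rank_share s j <= s.
Proof.
move=> s_ge0; under eq_bigr do rewrite rank_share_window.
rewrite exchange_big /=.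
apply: (@le_trans _ _ (\sum_(m < N) clamp01 (s - m%:R))).
  apply: ler_sum => m _; rewrite -mulr_suml.
  exact: ler_piMl (clamp01_ge0 _) (window_weights_le1 m).
by rewrite sum_clamp01_shift ge_max s_ge0 ge_min lexx orbT.
Qed.

End RankShare.

Lemma eq_rank_share (R : realFieldType) N (x y : 'I_N -> R) s j :
  x =1 y -> rank_share x s j = rank_share y s j.
Proof. by move=> /funext ->. Qed.

Lemma rank_share_perm (R : realFieldType) N (x : 'I_N -> R) (sigma : {perm 'I_N}) s j :
  rank_share (fun i => x (sigma i)) s j = rank_share x s (sigma j).
Proof.
have card_perm (p : pred 'I_N) : #|[set i | p (sigma i)]| = #|[set i | p i]|.
  rewrite -[RHS](card_preimset _ (@perm_inj _ sigma)).
  by apply: eq_card => i; rewrite !inE.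
by rewrite /rank_share /n_above /n_tied (card_perm (fun i => x (sigma j) < x i))
  (card_perm (fun i => x i == x (sigma j))).
Qed.

Section Exchangeable.
Variables (R : realFieldType) (T : finType) (N : nat) (w f : T -> R).
Hypotheses (w_ge0 : forall z, 0 <= w z) (w_sum1 : \sum_z w z = 1).

Lemma sum_prod_weight : \sum_(v : {ffun 'I_N -> T}) \prod_i w (v i) = 1.
Proof.
rewrite -(bigA_distr_bigA (fun (_ : 'I_N) z => w z)) /=.
by rewrite big1.
Qed.

Lemma expected_rank_share_sym s i j :
  \sum_(v : {ffun 'I_N -> T}) (\prod_l w (v l)) * rank_share (fun l => f (v l)) s i =
  \sum_(v : {ffun 'I_N -> T}) (\prod_l w (v l)) * rank_share (fun l => f (v l)) s j.
Proof.
pose sigma := tperm i j.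
pose swap (v : {ffun 'I_N -> T}) := [ffun l => v (sigma l)].
have swap_inj : injective swap.
  move=> v1 v2 /ffunP eq_v; apply/ffunP => l.
  by have := eq_v (sigma l); rewrite !ffunE tpermK.
rewrite (reindex_inj swap_inj); apply: eq_bigr => v _; congr (_ * _).
  by rewrite [RHS](reindex_inj (@perm_inj _ sigma)); apply: eq_bigr => l _; rewrite ffunE.
rewrite (@eq_rank_share _ _ _ (fun l => f (v (sigma l)))) => [|l]; last by rewrite ffunE.
by rewrite (rank_share_perm (fun l => f (v l))) tpermL.
Qed.

Lemma expected_rank_share_le (i : 'I_N) a : 0 <= a ->
  \sum_(v : {ffun 'I_N -> T})
     (\prod_l w (v l)) * rank_share (fun l => f (v l)) (a * N%:R) i <= a.
Proof.
move=> a_ge0; have N_gt0 : (0 : R) < N%:R by rewrite ltr0n (leq_ltn_trans _ (ltn_ord i)).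
pose E j := \sum_(v : {ffun 'I_N -> T})
  (\prod_l w (v l)) * rank_share (fun l => f (v l)) (a * N%:R) j.
rewrite -/(E i) -(ler_pM2l N_gt0) [leRHS]mulrC.
have -> : N%:R * E i = \sum_j E j.
  rewrite (eq_bigr (fun=> E i)) => [|j _]; last exact: expected_rank_share_sym.
  by rewrite sumr_const card_ord mulr_natl.
rewrite /E exchange_big /=.
apply: (@le_trans _ _ (\sum_(v : {ffun 'I_N -> T}) (\prod_l w (v l)) * (a * N%:R))).
  apply: ler_sum => v _; rewrite -mulr_sumr.
  by apply: ler_wpM2l; [exact: prodr_ge0 | exact/sum_rank_share_le/mulr_ge0].
by rewrite -mulr_suml sum_prod_weight mul1r.
Qed.

End Exchangeable.

Section FfunCons.
Variables (T : Type) (N : nat) (t0 : T) (t : 'I_N -> T).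

Definition ffun_cons : {ffun 'I_N.+1 -> T} :=
  [ffun i => if unlift ord0 i is Some r then t r else t0].

Lemma ffun_cons0 : ffun_cons ord0 = t0.
Proof. by rewrite ffunE unlift_none. Qed.

Lemma ffun_consS r : ffun_cons (lift ord0 r) = t r.
Proof. by rewrite ffunE liftK. Qed.

End FfunCons.

Lemma ffun_cons_comp (T U : Type) N (f : T -> U) t0 (t : 'I_N -> T) :
  ffun_cons (f t0) (fun r => f (t r)) =1 (fun i => f (ffun_cons t0 t i)).
Proof. by move=> i; rewrite !ffunE; case: unlift. Qed.

Lemma big_ffun_cons (R : Type) (idx : R) (op : Monoid.com_law idx) (T : finType)
    N (F : {ffun 'I_N.+1 -> T} -> R) :
  \big[op/idx]_(v : {ffun 'I_N.+1 -> T}) F v =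
  \big[op/idx]_(t0 : T) \big[op/idx]_(t : {ffun 'I_N -> T}) F (ffun_cons t0 t).
Proof.
rewrite pair_big /= (reindex (fun p : T * {ffun 'I_N -> T} => ffun_cons p.1 p.2)) //.
exists (fun v : {ffun 'I_N.+1 -> T} => (v ord0, [ffun r : 'I_N => v (lift ord0 r)])).
  move=> [t0 t] _ /=; rewrite ffun_cons0; congr pair.
  by apply/ffunP => r; rewrite ffunE ffun_consS.
by move=> v _; apply/ffunP => i; rewrite ffunE; case: unliftP => [r|] ->; rewrite ?ffunE.
Qed.

Lemma card_set_ord_recl N (p : pred 'I_N.+1) :
  #|[set i | p i]| = (p ord0 + #|[set r : 'I_N | p (lift ord0 r)]|)%N.
Proof.
rewrite -!sum1dep_card big_mkcond big_ord_recl /= -big_mkcond /=.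
by case: (p ord0).
Qed.

Section ConditionalDesign.
Variables (R : realType) (n : nat) (P : assign n -> R) (I : {set 'I_n}) (z0 : assign n).
Hypotheses (P_ge0 : forall z, 0 <= P z) (P_z0_gt0 : 0 < P z0).

Lemma cond_design_ge0 z : 0 <= cond_design P I z0 z.
Proof.
apply: divr_ge0; first by case: ifP.
by apply: sumr_ge0 => z' _.
Qed.

Lemma cond_design_sum1 : \sum_z cond_design P I z0 z = 1.
Proof.
rewrite /cond_design -mulr_suml -big_mkcond /= mulfV // gt_eqF //.
apply: lt_le_trans P_z0_gt0 _; rewrite (bigD1 z0) /=; last first.
  by apply/forallP => i; apply/implyP.
by rewrite lerDl; apply: sumr_ge0 => z _.
Qed.

Lemma cond_design_focal z : cond_design P I z0 z != 0 -> {in I, z =1 z0}.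
Proof.
rewrite /cond_design; case: ifP => [/forallP agree _ i iI | _]; last first.
  by rewrite mul0r eqxx.
by have /implyP/(_ iI)/eqP := agree i.
Qed.

End ConditionalDesign.

Section FocalStatistic.
Variables (R : realType) (n : nat) (I : {set 'I_n}) (k : nat) (fold : 'I_n -> 'I_k).

Lemma CV_eq_focal (F : Type) (L : learner R F) (feat : 'I_n -> F) (Y Y' : 'I_n -> R) :
  {in I, Y =1 Y'} -> CV fold I L feat Y = CV fold I L feat Y'.
Proof.
move=> eqY; rewrite /CV; congr (_ * _); apply: eq_bigr => m _.
apply: eq_bigr => i /andP[iI _]; rewrite eqY //; congr ((_ - _) ^+ 2); congr (L _ _).
by apply/eq_in_map => j; rewrite mem_filter mem_enum => /andP[_ jI]; rewrite eqY.
Qed.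

Lemma tstat_eq_focal (Tx : Type) (M0 : learner R (bool * Tx))
    (M1 : learner R (bool * R * ('I_n -> Tx))) A X (Y Y' : 'I_n -> R) z :
  {in I, Y =1 Y'} -> tstat fold I M0 M1 A X Y z = tstat fold I M0 M1 A X Y' z.
Proof. by move=> eqY; rewrite /tstat !(CV_eq_focal _ _ eqY). Qed.

End FocalStatistic.

Lemma pot_outcome_no_spillover (R : realType) n Tx mu b h g X eps (z z' : assign n) i :
  (forall X' i z, g X' i z = 0 :> R) -> z i = z' i ->
  pot_outcome (Tx := Tx) mu b h g X eps z i = pot_outcome mu b h g X eps z' i.
Proof. by move=> g0 eq_zi; rewrite /pot_outcome !g0 eq_zi. Qed.

Local Open Scope classical_set_scope.

Lemma lebesgue_itv01_affine_le (R : realType) (al D a c : R) : 0 < D -> 0 < c ->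
  lebesgue_measure (`[0%R, 1%R] `&` [set u : R | D^-1 * (a + u * c) <= al]) =
  (clamp01 ((al * D - a) / c))%:E.
Proof.
move=> D_gt0 c_gt0; set b := Num.min 1 ((al * D - a) / c).
have -> : `[0%R, 1%R] `&` [set u : R | D^-1 * (a + u * c) <= al] = `[0%R, b].
  have le_al u : (D^-1 * (a + u * c) <= al) = (u <= (al * D - a) / c).
    by rewrite ler_pdivrMl // ler_pdivlMr //; apply/idP/idP => ?; lra.
  apply/seteqP; split => u /=; rewrite !in_itv /= le_al /b le_min.
    by move=> [/andP[-> ->] ->].
  by move=> /andP[-> /andP[-> ->]].
rewrite lebesgue_measure_itv /= lte_fin oppr0 adde0 /clamp01 -/b.
case: ltP => b_sign; first by congr EFin; apply/esym/max_idPr/ltW.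
by congr EFin; apply/esym/max_idPl.
Qed.

Lemma lebesgue_pval_le (R : realType) Rn (t0 : R) (t : 'I_Rn -> R) alpha :
  lebesgue_measure (`[0%R, 1%R] `&` [set u : R | pval t0 t u <= alpha]) =
  (rank_share (ffun_cons t0 t) (alpha * Rn.+1%:R) ord0)%:E.
Proof.
have card_lift (q : R -> R -> bool) :
    #|[set i | q (ffun_cons t0 t ord0) (ffun_cons t0 t i)]%SET| =
    (q t0 t0 + #|[set r | q t0 (t r)]|)%N.
  rewrite card_set_ord_recl ffun_cons0; congr addn; apply: eq_card => r.
  rewrite inE ffun_consS; apply/idP/idP => [|/set_mem //]; exact: mem_set.
rewrite lebesgue_itv01_affine_le ?nat1r ?ltr0n // /rank_share /n_above /n_tied.
have /= -> := card_lift (fun y y' => y < y').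
by have /= -> := card_lift (fun y y' => y' == y); rewrite ltxx eqxx.
Qed.

Unset Implicit Arguments.

Theorem theorem3 (R : realType) (n : nat) (Tx : Type)
  (* design *)
  (P : assign n -> R)
  (P_ge0 : forall z, 0 <= P z) (P_sum1 : \sum_(z : assign n) P z = 1)
  (* outcome model *)
  (mu : R) (b h : Tx -> R) (g : ('I_n -> Tx) -> 'I_n -> assign n -> R)
  (X : 'I_n -> Tx) (eps : 'I_n -> R)
  (g_minus_i : depends_only_on_minus_i g)
  (* network, focal units, test statistic, number of resamples *)
  (A : 'I_n -> 'I_n -> bool) (I : {set 'I_n})
  (k : nat) (fold : 'I_n -> 'I_k)
  (M0 : learner R (bool * Tx)) (M1 : learner R (bool * R * ('I_n -> Tx)))
  (Rn : nat)
  (* realized treatment of the focal units (through z0_I) *)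
  (z0 : assign n) (Pz0 : 0 < P z0)
  (alpha : R) :
  (0 < n)%N ->
  (* null hypothesis H0^sp: h <> 0 and g = 0 *)
  (exists x, h x != 0) ->
  (forall X' i z, g X' i z = 0) ->
  0 <= alpha <= 1 ->
  let w := cond_design P I z0 in
  let Yobs := fun z : assign n => pot_outcome mu b h g X eps z in
  let tn := tstat fold I M0 M1 A X in
  ((\sum_(z : assign n) \sum_(zs : {ffun 'I_Rn -> assign n})
     ((w z * \prod_(r < Rn) w (zs r))%:E *
      lebesgue_measure
        (`[0%R, 1%R] `&`
         [set u : R | (pval (tn (Yobs z) z) (fun r => tn (Yobs z) (zs r)) u
                      <= alpha)%R])))%E
  <= alpha%:E)%E.
Proof.
move=> _ _ no_spillover /andP[alpha_ge0 _]; cbv zeta.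
set w := cond_design P I z0; set Yobs := fun z => pot_outcome _ _ _ _ _ _ z.
set tn := tstat fold I M0 M1 A X.
have w_ge0 := cond_design_ge0 I z0 P_ge0.
pose fv := tn (Yobs z0).
have tn_focal z : w z != 0 -> tn (Yobs z) = fv.
  move=> /cond_design_focal zI; apply: funext => z'; apply: tstat_eq_focal => i iI.
  exact/pot_outcome_no_spillover/zI.
rewrite [leLHS](_ : _ = \sum_(v : {ffun 'I_Rn.+1 -> assign n})
    ((\prod_i w (v i)) * rank_share (fun i => fv (v i)) (alpha * Rn.+1%:R) ord0)%:E).
  by rewrite sumEFin lee_fin expected_rank_share_le // cond_design_sum1.
rewrite big_ffun_cons; apply: eq_bigr => z _; apply: eq_bigr => zs _.
rewrite big_ord_recl ffun_cons0.
rewrite [in RHS](eq_bigr (fun r => w (zs r))) => [|r _]; last by rewrite ffun_consS.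
have [->|wz] := eqVneq (w z) 0; first by rewrite !mul0r mul0e.
rewrite tn_focal // lebesgue_pval_le (eq_rank_share _ _ (ffun_cons_comp fv z zs)).
by rewrite EFinM.
Qed.
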